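(* Let $b>0$, let $(\mathbf{x}_t,y_t)_{t\ge 1}$ be an arbitrary sequence with $\mathbf{x}_t\in\mathbb{R}^d$ and $y_t\in\{-1,+1\}$. Run the NR-RLS recursion: initialize $n_0^-=n_0^+=0$, $\mathbf{S}_0^-=\mathbf{S}_0^+=\mathbf{0}\in\mathbb{R}^{d\times d}$, $\mathbf{z}_0^-=\mathbf{z}_0^+=\mathbf{0}\in\mathbb{R}^d$, $\mathbf{R}_0^{-1}=\frac1b\mathbf{I}$, and for $t=1,2,\dots$ set $n_t^-=n_{t-1}^-+\frac{1-y_t}{2}$, $n_t^+=n_{t-1}^++\frac{1+y_t}{2}$, define $\beta_t^-,\beta_t^+,\beta_t,\bar{\mathbf{S}}_{t-1}$ as in the context, and $$\mathbf{G}_t^{-1}=\mathbf{R}_{t-1}^{-1}+\mathbf{R}_{t-1}^{-1}\big(\mathbf{I}-\beta_t\bar{\mathbf{S}}_{t-1}\mathbf{R}_{t-1}^{-1}\big)^{-1}\beta_t\bar{\mathbf{S}}_{t-1}\mathbf{R}_{t-1}^{-1},$$ $$\mathbf{R}_t^{-1}=\mathbf{G}_t^{-1}-\mathbf{G}_t^{-1}\big(\mathbf{I}+\beta_t\mathbf{x}_t\mathbf{x}_t^T\mathbf{G}_t^{-1}\big)^{-1}\beta_t\mathbf{x}_t\mathbf{x}_t^T\mathbf{G}_t^{-1},$$ $\mathbf{S}_t^\pm=\mathbf{S}_{t-1}^\pm+\beta_t^\pm(\mathbf{x}_t\mathbf{x}_t^T-\mathbf{S}_{t-1}^\pm)$,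 $\mathbf{z}_t^\pm=\mathbf{z}_{t-1}^\pm+\beta_t^\pm(\mathbf{x}_ty_t-\mathbf{z}_{t-1}^\pm)$, $\mathbf{z}_t=\mathbf{z}_t^-+\mathbf{z}_t^+$, and $\pmb w_t=\mathbf{R}_t^{-1}\mathbf{z}_t$. Then all the inverses appearing above exist, and for every $t\ge1$ the vector $\pmb w_t$ equals the batch TER solution $$\pmb w_t^{\mathrm{batch}}=\Big(\tfrac{1}{n_t^-}\sum_{i\le t,\,y_i=-1}\mathbf{x}_i\mathbf{x}_i^T+\tfrac{1}{n_t^+}\sum_{j\le t,\,y_j=+1}\mathbf{x}_j\mathbf{x}_j^T+b\mathbf{I}\Big)^{-1}\Big(\tfrac{1}{n_t^-}\sum_{i\le t,\,y_i=-1}\mathbf{x}_iy_i+\tfrac{1}{n_t^+}\sum_{j\le t,\,y_j=+1}\mathbf{x}_jy_j\Big),$$ (i.e. $(\mathbf{X}_t^T\mathbf{W}_t\mathbf{X}_t+b\mathbf{I})^{-1}\mathbf{X}_t^T\mathbf{W}_t\mathbf{y}_t$), which is the unique minimizer over $\pmb w\in\mathbb{R}^d$ of $$J_t(\pmb w)=\frac{1}{2n_t^-}\sum_{i\le t,\,y_i=-1}(y_i-\pmb w^T\mathbf{x}_i)^2+\frac{1}{2n_t^+}\sum_{j\le t,\,y_j=+1}(y_j-\pmb w^T\mathbf{x}_j)^2+\frac b2\|\pmb w\|_2^2 .$$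
   Context: Convention: any term of the form $\frac{1}{n}\sum(\cdots)$ over an empty class (i.e. with $n=0$) is defined to be zero. Definitions: $\beta_t^-=\frac{1}{n_t^-}$ if $y_t=-1$ and $\beta_t^-=0$ if $y_t=+1$; $\beta_t^+=\frac{1}{n_t^+}$ if $y_t=+1$ and $\beta_t^+=0$ if $y_t=-1$ (equivalently $\beta_t^-=\frac{1-y_t}{2n_t^-}$, $\beta_t^+=\frac{1+y_t}{2n_t^+}$ with the convention above); $\beta_t=\beta_t^-+\beta_t^+$; $\bar{\mathbf{S}}_{t-1}=\mathbf{S}_{t-1}^-$ if $y_t=-1$ and $\bar{\mathbf{S}}_{t-1}=\mathbf{S}_{t-1}^+$ if $y_t=+1$. $\mathbf{X}_t$ is the $t\times d$ matrix with rows $\mathbf{x}_1^T,\dots,\mathbf{x}_t^T$, $\mathbf{y}_t=(y_1,\dots,y_t)^T$, and $\mathbf{W}_t$ is the diagonal $t\times t$ matrix whose $i$-th diagonal entry is $1/n_t^-$ if $y_i=-1$ and $1/n_t^+$ if $y_i=+1$. *)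

From HB Require Import structures.
From mathcomp Require Import all_boot all_order all_algebra.
Set Implicit Arguments. Unset Strict Implicit. Unset Printing Implicit Defensive.
Import Order.TTheory GRing.Theory Num.Theory.
Local Open Scope ring_scope.

Section NRRLS.
Variable R : realFieldType.
Variable d : nat.
Variable b : R.
Variable x : nat -> 'cV[R]_d.   (* x t, used for t >= 1 *)
Variable y : nat -> R.          (* y t in {-1,+1}, used for t >= 1 *)

Fixpoint nminus (t : nat) : R :=
  match t with 0 => 0 | t'.+1 => nminus t' + (1 - y t'.+1) / 2 end.
Fixpoint nplus (t : nat) : R :=
  match t with 0 => 0 | t'.+1 => nplus t' + (1 + y t'.+1) / 2 end.

Definition betam (t : nat) : R := if y t == -1 then (nminus t)^-1 else 0.
Definition betap (t : nat) : R := if y t == 1 then (nplus t)^-1 else 0.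
Definition beta (t : nat) : R := betam t + betap t.

Definition xxT (t : nat) : 'M[R]_d := x t *m (x t)^T.

Record state := State {
  Sm : 'M[R]_d; Sp : 'M[R]_d; zm : 'cV[R]_d; zp : 'cV[R]_d; Rinv : 'M[R]_d }.

Definition Sbar (s : state) (t : nat) : 'M[R]_d :=
  if y t == -1 then Sm s else Sp s.

Definition A1 (s : state) (t : nat) : 'M[R]_d :=
  1%:M - beta t *: (Sbar s t *m Rinv s).

Definition Ginv (s : state) (t : nat) : 'M[R]_d :=
  Rinv s + Rinv s *m invmx (A1 s t) *m (beta t *: Sbar s t) *m Rinv s.

Definition A2 (s : state) (t : nat) : 'M[R]_d :=
  1%:M + beta t *: (xxT t *m Ginv s t).

Definition Rnew (s : state) (t : nat) : 'M[R]_d :=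
  Ginv s t - Ginv s t *m invmx (A2 s t) *m (beta t *: xxT t) *m Ginv s t.

Definition step (s : state) (t : nat) : state :=
  State (Sm s + betam t *: (xxT t - Sm s))
        (Sp s + betap t *: (xxT t - Sp s))
        (zm s + betam t *: (y t *: x t - zm s))
        (zp s + betap t *: (y t *: x t - zp s))
        (Rnew s t).

Fixpoint nrrls (t : nat) : state :=
  match t with
  | 0 => State 0 0 0 0 (b^-1 *: 1%:M)
  | t'.+1 => step (nrrls t') t'.+1
  end.

Definition w_rls (t : nat) : 'cV[R]_d :=
  Rinv (nrrls t) *m (zm (nrrls t) + zp (nrrls t)).

(* batch TER quantities; 1/0 * (empty sum) = 0 realizes the empty-class convention *)
Definition Mbatch (t : nat) : 'M[R]_d :=
  (nminus t)^-1 *: (\sum_(1 <= i < t.+1 | y i == -1) xxT i)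
  + (nplus t)^-1 *: (\sum_(1 <= j < t.+1 | y j == 1) xxT j)
  + b *: 1%:M.

Definition zbatch (t : nat) : 'cV[R]_d :=
  (nminus t)^-1 *: (\sum_(1 <= i < t.+1 | y i == -1) (y i *: x i))
  + (nplus t)^-1 *: (\sum_(1 <= j < t.+1 | y j == 1) (y j *: x j)).

Definition w_batch (t : nat) : 'cV[R]_d := invmx (Mbatch t) *m zbatch t.

Definition J (t : nat) (w : 'cV[R]_d) : R :=
  (2 * nminus t)^-1 * (\sum_(1 <= i < t.+1 | y i == -1) (y i - (w^T *m x i) 0 0) ^+ 2)
  + (2 * nplus t)^-1 * (\sum_(1 <= j < t.+1 | y j == 1) (y j - (w^T *m x j) 0 0) ^+ 2)
  + b / 2 * (\sum_(k < d) (w k 0) ^+ 2).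

End NRRLS.

From Pilot Require Import Defs.
From HB Require Import structures.
From mathcomp Require Import all_boot all_order all_algebra.
From mathcomp Require Import ring lra.
Set Implicit Arguments. Unset Strict Implicit. Unset Printing Implicit Defensive.
Import Order.TTheory GRing.Theory Num.Theory.
Local Open Scope ring_scope.

(* Write M_t = S_t^- + S_t^+ + b I for the batch TER matrix, where S_t^-, S_t^+
   are the class means of x_i x_i^T.  The proof has three independent parts.
   1. The vector recursions for S_t^+-, z_t^+- are running means (gain 1/n on
      the steps of their class), so they equal the batch class means.
   2. Passing from M_{t-1} to M_t = M_{t-1} + beta_t (x_t x_t^T - Sbar_{t-1})
      is a downdate by beta_t Sbar_{t-1} followed by an update by
      beta_t x_t x_t^T; the two lines of the inverse recursion are exactly the
      matrix inversion (Woodbury) lemma for these two steps.  Since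
      0 <= beta_t <= 1, every intermediate matrix is a psd matrix plus b I,
      hence positive definite, so all inverses exist and R_t^{-1} = M_t^{-1}
      by induction on t.
   3. J_t(w) = const + w^T M_t w / 2 - w^T z_t, and completing the square shows
      that M_t^{-1} z_t is its unique minimizer. *)
From Pilot Require Import Defs.
From HB Require Import structures.
From mathcomp Require Import all_boot all_order all_algebra.
From mathcomp Require Import ring lra.
Set Implicit Arguments. Unset Strict Implicit. Unset Printing Implicit Defensive.
Import Order.TTheory GRing.Theory Num.Theory.
Local Open Scope ring_scope.

Section RankUpdate.
Variables (R : comUnitRingType) (n : nat).
Implicit Types A B G C : 'M[R]_n.

Lemma invmx_eq A B : A *m B = 1%:M -> invmx A = B.
Proof.
move=> AB1; have [uA _] := mulmx1_unit AB1.
by rewrite -[invmx A]mulmx1 -AB1 mulmxA mulVmx // mul1mx.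
Qed.

Lemma invmxM A B : A \in unitmx -> B \in unitmx ->
  invmx (A *m B) = invmx B *m invmx A.
Proof.
by move=> uA uB; apply: invmx_eq; rewrite mulmxA mulmxK // mulmxV.
Qed.

Lemma invmx_update G C : G \in unitmx -> G + C \in unitmx ->
  1%:M + C *m invmx G \in unitmx /\
  invmx (G + C) = invmx G - invmx G *m invmx (1%:M + C *m invmx G) *m C *m invmx G.
Proof.
move=> uG uGC.
have eA : 1%:M + C *m invmx G = (G + C) *m invmx G by rewrite mulmxDl mulmxV.
have uA : 1%:M + C *m invmx G \in unitmx by rewrite eA unitmx_mul uGC unitmx_inv.
split=> //; rewrite eA invmxM ?unitmx_inv // invmxK.
rewrite (mulmxA (invmx G)) mulVmx // mul1mx.
have -> : invmx G - invmx (G + C) *m C *m invmx G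
    = invmx (G + C) *m ((G + C) - C) *m invmx G.
  by rewrite mulmxBr mulVmx // mulmxBl mul1mx.
by rewrite addrK mulmxK.
Qed.

Lemma invmx_downdate G C : G \in unitmx -> G - C \in unitmx ->
  1%:M - C *m invmx G \in unitmx /\
  invmx (G - C) = invmx G + invmx G *m invmx (1%:M - C *m invmx G) *m C *m invmx G.
Proof.
move=> uG uGC; have [] := invmx_update uG uGC.
by rewrite !(mulNmx, mulmxN) opprK.
Qed.
End RankUpdate.

Section QuadraticForms.
Variables (R : realFieldType) (n : nat).
Implicit Types (M N : 'M[R]_n) (u v w z : 'cV[R]_n).

Definition qf M u : R := (u^T *m M *m u) 0 0.
Definition psd M := forall u, 0 <= qf M u.
Definition posdef M := forall u, u != 0 -> 0 < qf M u.

Lemma qfD M N u : qf (M + N) u = qf M u + qf N u.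
Proof. by rewrite /qf mulmxDr mulmxDl mxE. Qed.

Lemma qfZ c M u : qf (c *: M) u = c * qf M u.
Proof. by rewrite /qf -scalemxAr -scalemxAl mxE. Qed.

Lemma qf_sum I r (P : pred I) (F : I -> 'M[R]_n) u :
  qf (\sum_(i <- r | P i) F i) u = \sum_(i <- r | P i) qf (F i) u.
Proof. by rewrite /qf mulmx_sumr mulmx_suml summxE. Qed.

Lemma qf1 u : qf 1%:M u = \sum_i u i 0 ^+ 2.
Proof. by rewrite /qf mulmx1 mxE; apply: eq_bigr => i _; rewrite mxE expr2. Qed.

Lemma qf_outer (x : 'cV[R]_n) u : qf (x *m x^T) u = (u^T *m x) 0 0 ^+ 2.
Proof.
rewrite /qf mulmxA -mulmxA -(trmxK (x^T *m u)) trmx_mul trmxK.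
by rewrite mxE big_ord1 expr2 !mxE.
Qed.

Lemma qf_subr M u v : M^T = M ->
  qf M (u - v) = qf M u - 2 * (u^T *m M *m v) 0 0 + qf M v.
Proof.
move=> sM; have vMu : (v^T *m M *m u) 0 0 = (u^T *m M *m v) 0 0.
  have tr1 (A : 'M[R]_1) : A 0 0 = A^T 0 0 by rewrite mxE.
  by rewrite tr1 !trmx_mul sM trmxK mulmxA.
have trB : (u - v)^T = u^T - v^T by apply/matrixP => i j; rewrite !mxE.
have entryB (A B : 'M[R]_1) : (A - B) 0 0 = A 0 0 - B 0 0 by rewrite !mxE.
rewrite /qf trB !mulmxBl !mulmxBr !entryB vMu; ring.
Qed.

Lemma psdD M N : psd M -> psd N -> psd (M + N).
Proof. by move=> pM pN u; rewrite qfD addr_ge0. Qed.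

Lemma psdZ c M : 0 <= c -> psd M -> psd (c *: M).
Proof. by move=> c0 pM u; rewrite qfZ mulr_ge0. Qed.

Lemma psd_sum I r (P : pred I) (F : I -> 'M[R]_n) :
  (forall i, P i -> psd (F i)) -> psd (\sum_(i <- r | P i) F i).
Proof. by move=> pF u; rewrite qf_sum sumr_ge0 // => i /pF. Qed.

Lemma psd_outer (x : 'cV[R]_n) : psd (x *m x^T).
Proof. by move=> u; rewrite qf_outer sqr_ge0. Qed.

Lemma posdef_ridge b N : 0 < b -> psd N -> posdef (N + b *: 1%:M).
Proof.
move=> b0 pN u u0; rewrite qfD qfZ qf1; apply: ltr_wpDl => //.
rewrite mulr_gt0 // lt_def sumr_ge0 ?andbT => [|i _]; last exact: sqr_ge0.
apply: contra u0 => /eqP/psumr_eq0P u2_0.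
apply/eqP/matrixP => i j; rewrite (ord1 j) !mxE.
by apply/eqP; rewrite -sqrf_eq0 u2_0 // => k _; exact: sqr_ge0.
Qed.

Lemma posdef_unitmx M : posdef M -> M \in unitmx.
Proof.
move=> pM; rewrite unitmxE unitfE; apply/negP => /det0P [v v0 vM0].
have := pM v^T; rewrite trmx_eq0 => /(_ v0).
by rewrite /qf trmxK vM0 mul0mx mxE ltxx.
Qed.

Lemma quad_complete_square M z c w : M^T = M -> M \in unitmx ->
  let f w := c + 2^-1 * qf M w - (w^T *m z) 0 0 in
  f w = f (invmx M *m z) + 2^-1 * qf M (w - invmx M *m z).
Proof.
move=> sM uM f; rewrite /f qf_subr //.
set ws := invmx M *m z; have -> : z = M *m ws by rewrite /ws mulKVmx.
rewrite /qf !mulmxA.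
by move: (_ 0 0) (_ 0 0) (_ 0 0) => a1 a2 a3; field.
Qed.

Lemma quad_argmin M z c (f : 'cV[R]_n -> R) : M^T = M -> posdef M ->
  (forall w, f w = c + 2^-1 * qf M w - (w^T *m z) 0 0) ->
  (forall w, f (invmx M *m z) <= f w) /\
  (forall w', (forall w, f w' <= f w) -> w' = invmx M *m z).
Proof.
move=> sM pM ef; have uM := posdef_unitmx pM.
have ef' w : f w = f (invmx M *m z) + 2^-1 * qf M (w - invmx M *m z).
  by rewrite !ef; exact: quad_complete_square.
split=> [w | w' w'min].
  rewrite [f w]ef' lerDl; have [->|wne] := eqVneq (w - invmx M *m z) 0.
    by rewrite /qf mulmx0 mxE mulr0.
  by rewrite mulr_ge0 ?invr_ge0 ?ler0n // ltW // pM.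
apply/eqP; rewrite -subr_eq0; apply: contraTT (w'min (invmx M *m z)).
by move=> wne; rewrite [f w']ef' -ltNge ltrDl mulr_gt0 ?invr_gt0 ?ltr0n // pM.
Qed.
End QuadraticForms.

(* Running means: a sum over the indices selected by P, divided by their
   count cnt (with 1/0 * 0 = 0 for an empty class), obeys the usual
   recursive update with gain 1/cnt on selected steps. *)
Section RunningMean.
Variables (R : realFieldType) (V : lmodType R).
Variables (P : pred nat) (f : nat -> V) (cnt : nat -> R).
Hypothesis cnt_step : forall t, cnt t.+1 = cnt t + (if P t.+1 then 1 else 0).
Hypothesis cnt_ge0 : forall t, 0 <= cnt t.

Let sumP t := \sum_(1 <= i < t.+1 | P i) f i.

Lemma sumP_step t : sumP t.+1 = sumP t + (if P t.+1 then f t.+1 else 0).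
Proof. by rewrite /sumP big_mkcond big_nat_recr //= -big_mkcond. Qed.

Lemma cnt_succ_neq0 t : cnt t + 1 != 0.
Proof. by apply/eqP => e; have := cnt_ge0 t; lra. Qed.

(* cnt counts the selected indices, so a zero count forces an empty sum and
   rescaling the mean by the count always recovers the sum. *)
Lemma scale_mean t : cnt t *: ((cnt t)^-1 *: sumP t) = sumP t.
Proof.
elim: t => [|t IH]; first by rewrite /sumP big_geq // !scaler0.
rewrite sumP_step cnt_step; case: (P t.+1); last by rewrite !addr0.
by rewrite scalerA mulfV ?cnt_succ_neq0 // scale1r.
Qed.

Lemma mean_step t : (cnt t.+1)^-1 *: sumP t.+1
  = (cnt t)^-1 *: sumP t
    + (if P t.+1 then (cnt t.+1)^-1 else 0) *: (f t.+1 - (cnt t)^-1 *: sumP t).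
Proof.
rewrite sumP_step cnt_step; case: (P t.+1); last by rewrite !addr0 scale0r addr0.
have cnt1 := cnt_succ_neq0 t.
set m := (cnt t)^-1 *: _; rewrite -{1}(scale_mean t) -/m.
rewrite scalerDr scalerBr scalerA addrA addrAC; congr (_ + _).
rewrite -[X in X - _](scale1r m) -scalerBl; by congr (_ *: _); field.
Qed.
End RunningMean.

Section InverseStep.
Variables (R : realFieldType) (d : nat) (x : nat -> 'cV[R]_d) (y : nat -> R).

(* One step of the inverse recursion: if R_{t-1}^{-1} inverts P + Q + b I, with
   P = Sbar_{t-1} and Q psd, then G_t^{-1} inverts the downdate by beta_t P
   (first Woodbury step) and R_t^{-1} inverts the subsequent update by
   beta_t x_t x_t^T (second Woodbury step), i.e. the matrix
   P + Q + b I + beta_t (x_t x_t^T - P); every intermediate matrix stays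
   positive definite because 0 <= beta_t <= 1. *)
Lemma Rnew_inverse (b : R) s t (Q : 'M[R]_d) :
  0 < b -> psd (Sbar y s t) -> psd Q -> 0 <= beta y t <= 1 ->
  Rinv s = invmx (Sbar y s t + Q + b *: 1%:M) ->
  [/\ A1 y s t \in unitmx, A2 x y s t \in unitmx &
      Rnew x y s t
      = invmx (Sbar y s t + Q + b *: 1%:M + beta y t *: (xxT x t - Sbar y s t))].
Proof.
set P := Sbar y s t; set be := beta y t; set M := P + Q + b *: 1%:M.
move=> b0 pP pQ /andP[be0 be1] eR.
have pP' : psd ((1 - be) *: P) by apply: psdZ; rewrite ?subr_ge0.
have pX : psd (be *: xxT x t) by apply: psdZ => //; exact: psd_outer.
have uM : M \in unitmx.
  by apply/posdef_unitmx/posdef_ridge => //; exact: psdD.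
have eG : M - be *: P = (1 - be) *: P + Q + b *: 1%:M.
  by apply/matrixP => i j; rewrite !mxE; ring.
have uG : M - be *: P \in unitmx.
  by rewrite eG; apply/posdef_unitmx/posdef_ridge => //; exact: psdD.
have eH : M - be *: P + be *: xxT x t = M + be *: (xxT x t - P).
  by apply/matrixP => i j; rewrite !mxE; ring.
have uH : M - be *: P + be *: xxT x t \in unitmx.
  rewrite eG addrAC; apply/posdef_unitmx/posdef_ridge => //.
  by apply: psdD => //; exact: psdD.
have [uA1 eGinv] := invmx_downdate uM uG.
have [uA2 eHinv] := invmx_update uG uH.
have eA1 : A1 y s t = 1%:M - (be *: P) *m invmx M by rewrite /A1 eR scalemxAl.
have eGi : Ginv y s t = invmx (M - be *: P) by rewrite eGinv /Ginv eA1 eR.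
have eA2 : A2 x y s t = 1%:M + (be *: xxT x t) *m invmx (M - be *: P).
  by rewrite /A2 -eGi scalemxAl.
split; first (by rewrite eA1); first (by rewrite eA2).
by rewrite /Rnew eA2 eGi -eHinv eH.
Qed.
End InverseStep.

Lemma sum_sq_expand (R : realFieldType) (I : Type) (r : seq I) (P : pred I)
    (Y A : I -> R) (c : R) :
  (2 * c)^-1 * \sum_(i <- r | P i) (Y i - A i) ^+ 2
  = (2 * c)^-1 * \sum_(i <- r | P i) Y i ^+ 2
    + 2^-1 * (c^-1 * \sum_(i <- r | P i) A i ^+ 2)
    - c^-1 * \sum_(i <- r | P i) Y i * A i.
Proof.
rewrite (eq_bigr (fun i => Y i ^+ 2 - 2 * (Y i * A i) + A i ^+ 2)); last first.
  by move=> i _; ring.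
rewrite big_split sumrB /= -mulr_sumr invfM.
by move: (c^-1) => ci; field.
Qed.

Section NRRLS.
Variables (R : realFieldType) (d : nat) (b : R).
Variables (x : nat -> 'cV[R]_d) (y : nat -> R).
Hypothesis b_gt0 : 0 < b.
Hypothesis y_label : forall t : nat, (0 < t)%N -> y t = 1 \/ y t = -1.

Local Notation st t := (nrrls b x y t).

Lemma m1_neq1 : ((-1 : R) == 1) = false.
Proof. by apply/eqP => e; lra. Qed.

Lemma one_neqm1 : ((1 : R) == -1) = false.
Proof. by apply/eqP => e; lra. Qed.

Lemma nminusS t : nminus y t.+1 = nminus y t + (if y t.+1 == -1 then 1 else 0).
Proof.
by rewrite /=; case: (y_label (ltn0Sn t)) => ->; rewrite ?eqxx ?one_neqm1;
  congr (_ + _); field.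
Qed.

Lemma nplusS t : nplus y t.+1 = nplus y t + (if y t.+1 == 1 then 1 else 0).
Proof.
by rewrite /=; case: (y_label (ltn0Sn t)) => ->; rewrite ?eqxx ?m1_neq1;
  congr (_ + _); field.
Qed.

Lemma nminus_ge0 t : 0 <= nminus y t.
Proof. by elim: t => [|t IH] //; rewrite nminusS; case: ifP => _; lra. Qed.

Lemma nplus_ge0 t : 0 <= nplus y t.
Proof. by elim: t => [|t IH] //; rewrite nplusS; case: ifP => _; lra. Qed.

Definition Sminus_mean t : 'M[R]_d :=
  (nminus y t)^-1 *: \sum_(1 <= i < t.+1 | y i == -1) xxT x i.
Definition Splus_mean t : 'M[R]_d :=
  (nplus y t)^-1 *: \sum_(1 <= i < t.+1 | y i == 1) xxT x i.
Definition zminus_mean t : 'cV[R]_d :=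
  (nminus y t)^-1 *: \sum_(1 <= i < t.+1 | y i == -1) (y i *: x i).
Definition zplus_mean t : 'cV[R]_d :=
  (nplus y t)^-1 *: \sum_(1 <= i < t.+1 | y i == 1) (y i *: x i).

Lemma nrrls_means t :
  [/\ Sm (st t) = Sminus_mean t, Sp (st t) = Splus_mean t,
      zm (st t) = zminus_mean t & zp (st t) = zplus_mean t].
Proof.
elim: t => [|t [eSm eSp ezm ezp]].
  by rewrite /Sminus_mean /Splus_mean /zminus_mean /zplus_mean !big_geq // !scaler0.
rewrite /= eSm eSp ezm ezp /betam /betap.
split; symmetry.
- exact: (mean_step (P := fun i => y i == -1) _ nminusS nminus_ge0).
- exact: (mean_step (P := fun i => y i == 1) _ nplusS nplus_ge0).
- exact: (mean_step (P := fun i => y i == -1) _ nminusS nminus_ge0).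
- exact: (mean_step (P := fun i => y i == 1) _ nplusS nplus_ge0).
Qed.

Lemma psd_Sminus_mean t : psd (Sminus_mean t).
Proof.
by apply: psdZ; [rewrite invr_ge0 nminus_ge0 | apply: psd_sum => i _; exact: psd_outer].
Qed.

Lemma psd_Splus_mean t : psd (Splus_mean t).
Proof.
by apply: psdZ; [rewrite invr_ge0 nplus_ge0 | apply: psd_sum => i _; exact: psd_outer].
Qed.

Lemma Mbatch_means t : Mbatch b x y t = Sminus_mean t + Splus_mean t + b *: 1%:M.
Proof. by []. Qed.

Lemma Mbatch_posdef t : posdef (Mbatch b x y t).
Proof.
by rewrite Mbatch_means; apply: posdef_ridge => //;
  apply: psdD; [exact: psd_Sminus_mean | exact: psd_Splus_mean].
Qed.

Lemma Mbatch_sym t : (Mbatch b x y t)^T = Mbatch b x y t.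
Proof.
rewrite /Mbatch !linearD !linearZ /= !linear_sum /= trmx1.
by congr (_ + _ + _); apply: eq_bigr => i _; rewrite /xxT trmx_mul trmxK.
Qed.

(* The gain beta_t is the inverse of a count that is at least one. *)
Lemma beta_range t : 0 <= beta y t.+1 <= 1.
Proof.
rewrite /beta /betam /betap.
case: (y_label (ltn0Sn t)) => ey; rewrite ey ?eqxx ?one_neqm1 ?m1_neq1 ?add0r ?addr0.
- have n1 : 1 <= nplus y t.+1 by rewrite nplusS ey eqxx; have := nplus_ge0 t; lra.
  by rewrite invr_ge0 invf_le1 ?(le_trans ler01 n1) //; lra.
- have n1 : 1 <= nminus y t.+1 by rewrite nminusS ey eqxx; have := nminus_ge0 t; lra.
  by rewrite invr_ge0 invf_le1 ?(le_trans ler01 n1) //; lra.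
Qed.

(* Before step t+1, the batch matrix splits as Sbar_t + Q + b I with Q psd
   (Q is the mean of the class that y_{t+1} does not belong to). *)
Lemma Mbatch_split t : exists2 Q, psd Q &
  Mbatch b x y t = Sbar y (st t) t.+1 + Q + b *: 1%:M.
Proof.
have [eSm eSp _ _] := nrrls_means t; rewrite Mbatch_means /Sbar -eSm -eSp.
case: (y_label (ltn0Sn t)) => ->; rewrite ?eqxx ?one_neqm1 ?m1_neq1.
- by exists (Sm (st t)); rewrite ?(addrC (Sm _)) // eSm; exact: psd_Sminus_mean.
- by exists (Sp (st t)); rewrite // eSp; exact: psd_Splus_mean.
Qed.

Lemma psd_Sbar t : psd (Sbar y (st t) t.+1).
Proof.
have [eSm eSp _ _] := nrrls_means t; rewrite /Sbar eSm eSp.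
by case: ifP => _; [exact: psd_Sminus_mean | exact: psd_Splus_mean].
Qed.

Lemma Mbatch_step t : Mbatch b x y t.+1
  = Mbatch b x y t + beta y t.+1 *: (xxT x t.+1 - Sbar y (st t) t.+1).
Proof.
have [eSm eSp _ _] := nrrls_means t; have [eSm' eSp' _ _] := nrrls_means t.+1.
rewrite !Mbatch_means -eSm -eSp -eSm' -eSp' /= /beta /betam /betap /Sbar.
case: (y_label (ltn0Sn t)) => ->; rewrite ?eqxx ?one_neqm1 ?m1_neq1;
  by apply/matrixP => i j; rewrite !mxE; ring.
Qed.

Lemma Rinv_step t : Rinv (st t) = invmx (Mbatch b x y t) ->
  [/\ A1 y (st t) t.+1 \in unitmx, A2 x y (st t) t.+1 \in unitmx &
      Rinv (st t.+1) = invmx (Mbatch b x y t.+1)].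
Proof.
move=> eR; have [Q pQ eM] := Mbatch_split t; rewrite eM in eR.
have [uA1 uA2 eRnew] := Rnew_inverse x b_gt0 (psd_Sbar t) pQ (beta_range t) eR.
by split; rewrite // Mbatch_step eM.
Qed.

Lemma Rinv_batch t : Rinv (st t) = invmx (Mbatch b x y t).
Proof.
elim: t => [|t IH]; last by have [] := Rinv_step IH.
by rewrite /Mbatch !big_geq // !scaler0 !add0r /= !scalemx1 invmx_scalar.
Qed.

Definition Jconst t : R :=
  (2 * nminus y t)^-1 * \sum_(1 <= i < t.+1 | y i == -1) y i ^+ 2
  + (2 * nplus y t)^-1 * \sum_(1 <= i < t.+1 | y i == 1) y i ^+ 2.

Lemma inner_sum (w : 'cV[R]_d) c (P : pred nat) t :
  (w^T *m (c *: \sum_(1 <= i < t.+1 | P i) (y i *: x i))) 0 0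
  = c * \sum_(1 <= i < t.+1 | P i) y i * (w^T *m x i) 0 0.
Proof.
rewrite -scalemxAr mxE mulmx_sumr summxE; congr (_ * _).
by apply: eq_bigr => i _; rewrite -scalemxAr mxE.
Qed.

Lemma qf_sum_outer (w : 'cV[R]_d) c (P : pred nat) t :
  qf (c *: \sum_(1 <= i < t.+1 | P i) xxT x i) w
  = c * \sum_(1 <= i < t.+1 | P i) (w^T *m x i) 0 0 ^+ 2.
Proof. by rewrite qfZ qf_sum; congr (_ * _); apply: eq_bigr => i _; rewrite qf_outer. Qed.

Lemma J_quadratic t w : J b x y t w
  = Jconst t + 2^-1 * qf (Mbatch b x y t) w - (w^T *m zbatch x y t) 0 0.
Proof.
rewrite /J /Mbatch /zbatch !qfD !qf_sum_outer qfZ qf1 mulmxDr mxE !inner_sum.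
by rewrite !sum_sq_expand /Jconst; ring.
Qed.
End NRRLS.

Unset Implicit Arguments.

Theorem theorem1 (R : realFieldType) (d : nat) (b : R)
    (x : nat -> 'cV[R]_d) (y : nat -> R)
    (hb : 0 < b)
    (hy : forall t : nat, (0 < t)%N -> y t = 1 \/ y t = -1) :
  forall t : nat, (0 < t)%N ->
  [/\ A1 y (nrrls b x y t.-1) t \in unitmx,
      A2 x y (nrrls b x y t.-1) t \in unitmx,
      Mbatch b x y t \in unitmx,
      w_rls b x y t = w_batch b x y t &
      (forall w : 'cV[R]_d, J b x y t (w_batch b x y t) <= J b x y t w) /\
      (forall w' : 'cV[R]_d,
         (forall w : 'cV[R]_d, J b x y t w' <= J b x y t w) ->
         w' = w_batch b x y t)].
Proof.
case=> // t _ /=.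
have eR := Rinv_batch x hb hy.
have [uA1 uA2 _] := Rinv_step hb hy (eR t).
have [_ _ ezm ezp] := nrrls_means b x hy t.+1.
have pM := Mbatch_posdef x hb hy t.+1.
split=> //.
- exact: posdef_unitmx.
- by rewrite /w_rls eR ezm ezp.
- exact: quad_argmin (Mbatch_sym b x y t.+1) pM (J_quadratic b x y t.+1).
Qed.
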